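(* Let $n\ge1$, let $\beta$ be a braid on $n$ strands with exponent sum $w$, and let $\Delta=\Delta_n$ be the Garside positive half-twist braid on $n$ strands. Then the coefficient of $v^{w-n+1}$ in $P_{\widehat\beta}(v,z)$ equals $(-1)^{n-1}$ times the coefficient of $v^{w+n^2-1}$ in $P_{\widehat{\beta\Delta^2}}(v,z)$ (coefficients regarded as Laurent polynomials in $z$).
   Context: For a braid $\gamma$, $\widehat\gamma$ denotes its usual closure, oriented by the braid direction. The Homfly polynomial $P_L(v,z)$ of an oriented link $L$ is the isotopy invariant normalized by $P=1$ on the unknot and satisfying $v^{-1}P_{L_+}-vP_{L_-}=zP_{L_0}$, where $L_+,L_-,L_0$ differ at one crossing which is positive, negative, resp. smoothed. Equivalently $P_D=v^{\mathrm{writhe}(D)}H_D$ with $H$ the framed Homfly polynomial ($H_{L_+}-H_{L_-}=zH_{L_0}$, positive kink multiplies by $v$, negative kink by $v^{-1}$, $H=1$ on the crossingless unknot). *)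

From mathcomp Require Import all_boot all_order all_algebra.
Set Implicit Arguments. Unset Strict Implicit. Unset Printing Implicit Defensive.
Import Order.TTheory GRing.Theory Num.Theory.
Local Open Scope ring_scope.

(* Laurent polynomials in v, z with integer coefficients are represented by  *)
(* their coefficient function:  L a b  = coefficient of v^a z^b.            *)
Definition laurent2 := int -> int -> int.

Definition laurent_one : laurent2 := fun a b => ((a == 0) && (b == 0))%:R.

(* Braid words.  A letter (i, true) is the standard generator sigma_i (a     *)
(* positive crossing), (i, false) is sigma_i^{-1}.  A word is a braid on n   *)
Definition letter := (nat * bool)%type.
Definition bword := seq letter.

Definition wf_bword (n : nat) (u : bword) : bool :=
  all (fun g : letter => (0 < g.1)%N && (g.1 < n)%N) u.

Definition exp_sum (u : bword) : int :=
  \sum_(g <- u) (if g.2 then 1 else -1).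

(* Garside positive half twist Delta_n =
   (s_1 s_2 ... s_{n-1}) (s_1 ... s_{n-2}) ... (s_1 s_2) (s_1). *)
Definition garside (n : nat) : bword :=
  flatten [seq [seq (j.+1, true) | j <- iota 0 k] | k <- rev (iota 1 n.-1)].

Definition braid_move (x y : bword) : Prop :=
  (exists i b, x = [:: (i, b); (i, ~~ b)] /\ y = [::])
  \/ (exists i j b c, (i.+2 <= j)%N /\ x = [:: (i, b); (j, c)] /\ y = [:: (j, c); (i, b)])
  \/ (exists i, x = [:: (i, true); (i.+1, true); (i, true)] /\
                y = [:: (i.+1, true); (i, true); (i.+1, true)]).

(* P : forall n, braid words on n strands -> Laurent polynomials, viewed as   *)
(* the Homfly polynomial of the closure.  The following properties (Markov's *)
(* theorem + skein relation + normalisation) characterise the Homfly         *)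
(* polynomial of braid closures uniquely:                                     *)
(*   v^{-1} P(L+) - v P(L-) = z P(L0),   P(unknot) = 1.                      *)
(* In coefficients: (v^{-1} A)_{a,b} = A_{a+1,b}, (v B)_{a,b} = B_{a-1,b},   *)
(* (z C)_{a,b} = C_{a,b-1}.                                                  *)
Definition is_homfly_of_closures (P : nat -> bword -> laurent2) : Prop :=
  [/\
      (forall n u x y w, wf_bword n (u ++ x ++ w) -> wf_bword n (u ++ y ++ w) ->
         braid_move x y -> P n (u ++ x ++ w) = P n (u ++ y ++ w)),
      (forall n u w, wf_bword n (u ++ w) -> P n (u ++ w) = P n (w ++ u)),
      (forall n u b, (0 < n)%N -> wf_bword n u -> P n.+1 (rcons u (n, b)) = P n u),
      (forall n u w i, wf_bword n (u ++ (i, true) :: w) ->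
         forall a b : int,
           P n (u ++ (i, true) :: w) (a + 1) b - P n (u ++ (i, false) :: w) (a - 1) b
           = P n (u ++ w) a (b - 1))
    & (* normalisation: the closure of the trivial 1-strand braid is the unknot *)
      P 1%N [::] = laurent_one].

(* The Morton-Franks-Williams inequality confines the v-degrees of the Homfly
   polynomial of the closure of a braid x on M strands to [e - M + 1, e + M - 1],
   e the exponent sum of x.  The two extreme coefficients are invariant under braid
   relations and conjugation and satisfy the skein relation with the powers of v
   stripped off.  Under destabilisation the bottom one is unchanged, the top one
   changes sign (up to a shift of the z-degree), and the top one vanishes on words
   a sigma_M b with a, b on M strands.  Modulo braid and skein relations, braids on
   M + 1 strands reduce to braids on M strands and to such words, so the identity
   follows by induction on the number of strands from
   Delta_{M+1}^2 = Delta_M^2 J_M with J_M = sigma_M ... sigma_1 sigma_1 ... sigma_M: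
   J_M commutes with braids on M strands, and appending it to a braid on M strands
   does not change its top coefficient on M + 1 strands. *)

From mathcomp Require Import all_boot all_order all_algebra.
From mathcomp Require Import zify ring.
Import GRing.Theory Num.Theory.
Local Open Scope ring_scope.

Set Implicit Arguments. Unset Strict Implicit. Unset Printing Implicit Defensive.

Arguments wf_bword : simpl never.

Lemma wf_bword_cat M u w : wf_bword M (u ++ w) = wf_bword M u && wf_bword M w.
Proof. exact: all_cat. Qed.

Lemma wf_bword_cons M g w :
  wf_bword M (g :: w) = [&& (0 < g.1)%N, (g.1 < M)%N & wf_bword M w].
Proof. by rewrite /wf_bword /= andbA. Qed.

Lemma wf_bword_widen M M' u : (M <= M')%N -> wf_bword M u -> wf_bword M' u.
Proof. by move=> leMM'; apply: sub_all => g /andP[-> /leq_trans->]. Qed.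

Lemma wf_bword1 u : wf_bword 1 u -> u = [::].
Proof. by case: u => [|[[|i] e] u]. Qed.

Lemma exp_sum_cat u w : exp_sum (u ++ w) = exp_sum u + exp_sum w.
Proof. exact: big_cat. Qed.

Lemma exp_sum_cons g w : exp_sum (g :: w) = (if g.2 then 1 else -1) + exp_sum w.
Proof. exact: big_cons. Qed.

Lemma exp_sum_nil : exp_sum [::] = 0.
Proof. exact: big_nil. Qed.

Lemma exp_sum_catC u w : exp_sum (u ++ w) = exp_sum (w ++ u).
Proof. by rewrite !exp_sum_cat addrC. Qed.

Lemma exp_sum_insert u w i (b : bool) :
  exp_sum (u ++ (i, b) :: w) = exp_sum (u ++ w) + (if b then 1 else -1).
Proof. by rewrite !exp_sum_cat exp_sum_cons addrCA addrC. Qed.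

Inductive braid_eq (M : nat) : bword -> bword -> Prop :=
| braid_eq_move u x y w : braid_move x y -> wf_bword M x -> wf_bword M y ->
    braid_eq M (u ++ x ++ w) (u ++ y ++ w)
| braid_eq_refl x : braid_eq M x x
| braid_eq_sym x y : braid_eq M x y -> braid_eq M y x
| braid_eq_trans x y z : braid_eq M x y -> braid_eq M y z -> braid_eq M x z.

Section BraidEq.

Variable M : nat.

Lemma braid_eq_cat u w x y : braid_eq M x y -> braid_eq M (u ++ x ++ w) (u ++ y ++ w).
Proof.
elim=> [u' x' y' w' mv wx wy | x' | x' y' _ IH | x' y' z' _ IH1 _ IH2].
- have reassoc z : u ++ (u' ++ z ++ w') ++ w = (u ++ u') ++ z ++ (w' ++ w).
    by rewrite !catA.
  by rewrite !reassoc; apply: braid_eq_move.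
- exact: braid_eq_refl.
- exact: braid_eq_sym.
- exact: braid_eq_trans IH1 IH2.
Qed.

Lemma braid_eq_catl u x y : braid_eq M x y -> braid_eq M (u ++ x) (u ++ y).
Proof. by move/(braid_eq_cat u [::]); rewrite !cats0. Qed.

Lemma braid_eq_catr w x y : braid_eq M x y -> braid_eq M (x ++ w) (y ++ w).
Proof. exact: braid_eq_cat [::] w x y. Qed.

Lemma braid_eq_cons g x y : braid_eq M x y -> braid_eq M (g :: x) (g :: y).
Proof. exact: braid_eq_catl [:: g] x y. Qed.

Lemma braid_eq_wf x y : braid_eq M x y -> wf_bword M x = wf_bword M y.
Proof.
elim=> [u x' y' w _ wx wy | // | x' y' _ -> // | x' y' z _ -> _ -> //].
by rewrite !wf_bword_cat wx wy.
Qed.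

Lemma braid_move_exp_sum x y : braid_move x y -> exp_sum x = exp_sum y.
Proof.
case=> [[i [[] [-> ->]]] | [[i [j [b [c [_ [-> ->]]]]]] | [i [-> ->]]]];
  rewrite !exp_sum_cons ?exp_sum_nil //; lia.
Qed.

Lemma braid_eq_exp_sum x y : braid_eq M x y -> exp_sum x = exp_sum y.
Proof.
elim=> [u x' y' w mv _ _ | // | x' y' _ -> // | x' y' z _ -> _ -> //].
by rewrite !exp_sum_cat (braid_move_exp_sum mv).
Qed.

Lemma braid_eq_cancel i b : (0 < i < M)%N -> braid_eq M [:: (i, b); (i, ~~ b)] [::].
Proof.
move=> /andP[i_gt0 lt_iM].
have := @braid_eq_move M [::] [:: (i, b); (i, ~~ b)] [::] [::].
rewrite /=; apply; first by left; exists i, b.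
  by rewrite /wf_bword /= i_gt0 lt_iM.
by [].
Qed.

Lemma braid_eq_far i j b c : (0 < i)%N -> (i.+2 <= j)%N -> (j < M)%N ->
  braid_eq M [:: (i, b); (j, c)] [:: (j, c); (i, b)].
Proof.
move=> i_gt0 far_ij lt_jM.
have wf_ij : wf_bword M [:: (i, b); (j, c)] by rewrite /wf_bword /=; lia.
have := @braid_eq_move M [::] [:: (i, b); (j, c)] [:: (j, c); (i, b)] [::].
rewrite /=; apply=> //; first by right; left; exists i, j, b, c.
by rewrite /wf_bword /=; lia.
Qed.

Lemma braid_eq_three i : (0 < i)%N -> (i.+1 < M)%N ->
  braid_eq M [:: (i, true); (i.+1, true); (i, true)]
             [:: (i.+1, true); (i, true); (i.+1, true)].
Proof.
move=> i_gt0 lt_iM.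
have wf3 : wf_bword M [:: (i, true); (i.+1, true); (i, true)] by rewrite /wf_bword /=; lia.
have := @braid_eq_move M [::] [:: (i, true); (i.+1, true); (i, true)]
  [:: (i.+1, true); (i, true); (i.+1, true)] [::].
rewrite /=; apply=> //; first by right; right; exists i.
by rewrite /wf_bword /=; lia.
Qed.

Definition far_from (j : nat) (c : bword) : bool :=
  all (fun g : letter => (g.1.+2 <= j)%N || (j.+2 <= g.1)%N) c.

Lemma far_from_wf j c : wf_bword j.-1 c -> far_from j c.
Proof. by apply: sub_all => -[i e] /andP[_ /= lt_i]; apply/orP; left; lia. Qed.

Lemma braid_eq_far_word j e c : (0 < j < M)%N -> wf_bword M c -> far_from j c ->
  braid_eq M ((j, e) :: c) (c ++ [:: (j, e)]).
Proof.
move=> /andP[j_gt0 lt_jM]; elim: c => [|[i b] c IH]; first by move=> *; apply: braid_eq_refl.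
rewrite wf_bword_cons /= => /and3P[/= i_gt0 lt_iM wc] /andP[/= far_ij fc].
apply: braid_eq_trans (braid_eq_cons _ (IH wc fc)).
case/orP: far_ij => far_ij.
- by apply: braid_eq_sym; apply: (braid_eq_catr c (braid_eq_far _ _ i_gt0 far_ij lt_jM)).
- exact: (braid_eq_catr c (braid_eq_far _ _ j_gt0 far_ij lt_iM)).
Qed.

End BraidEq.

Lemma braid_eq_widen M M' x y : (M <= M')%N -> braid_eq M x y -> braid_eq M' x y.
Proof.
move=> leMM'; elim=> [u x' y' w mv wx wy | x' | x' y' _ | x' y' z _ IH1 _ IH2].
- by apply: braid_eq_move => //; apply: wf_bword_widen leMM' _.
- exact: braid_eq_refl.
- exact: braid_eq_sym.
- exact: braid_eq_trans IH1 IH2.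
Qed.

Fixpoint ascent (k : nat) : bword :=
  if k is k'.+1 then ascent k' ++ [:: (k, true)] else [::].

Fixpoint descent (k : nat) : bword :=
  if k is k'.+1 then (k, true) :: descent k' else [::].

Fixpoint jucys_murphy (k : nat) : bword :=
  if k is k'.+1 then (k, true) :: jucys_murphy k' ++ [:: (k, true)] else [::].

Lemma jucys_murphyE k : jucys_murphy k = descent k ++ ascent k.
Proof. by elim: k => [|k IH] //=; rewrite IH -catA. Qed.

Lemma wf_ascent M k : (k < M)%N -> wf_bword M (ascent k).
Proof.
elim: k => [|k IH] // lt_kM.
by rewrite /= wf_bword_cat IH ?(ltnW lt_kM) // /wf_bword /= lt_kM.
Qed.

Lemma wf_descent M k : (k < M)%N -> wf_bword M (descent k).
Proof. by elim: k => [|k IH] // lt_kM; rewrite /= wf_bword_cons /= lt_kM IH // ltnW. Qed.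

Lemma wf_jucys_murphy M k : (k < M)%N -> wf_bword M (jucys_murphy k).
Proof. by move=> lt_kM; rewrite jucys_murphyE wf_bword_cat wf_descent // wf_ascent. Qed.

Lemma exp_sum_ascent k : exp_sum (ascent k) = k%:Z.
Proof.
elim: k => [|k IH]; rewrite /= ?exp_sum_nil // exp_sum_cat IH exp_sum_cons exp_sum_nil /=.
by rewrite addr0 addrC -intS.
Qed.

Lemma ascent_iota k : ascent k = [seq (j.+1, true) | j <- iota 0 k].
Proof. by elim: k => [|k IH] //; rewrite -addn1 iotaD map_cat /= -IH addn1. Qed.

Lemma garsideS k : garside k.+1 = ascent k ++ garside k.
Proof.
have garside_ascent n : garside n = flatten [seq ascent j | j <- rev (iota 1 n.-1)].
  by rewrite /garside; congr flatten; apply: eq_map => j; rewrite ascent_iota.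
case: k => [|k] //; rewrite !garside_ascent !succnK -(addn1 k) iotaD rev_cat.
by rewrite /= add0n addn1.
Qed.

Lemma wf_garside k : wf_bword k (garside k).
Proof.
elim: k => [|k IH] //; rewrite garsideS wf_bword_cat wf_ascent //.
exact: wf_bword_widen IH.
Qed.

Lemma exp_sum_garside2 k :
  exp_sum (garside k) + exp_sum (garside k) = (k * k.-1)%N%:Z.
Proof.
elim: k => [|k IH]; first by rewrite /garside /= exp_sum_nil.
rewrite garsideS exp_sum_cat exp_sum_ascent.
rewrite addrACA IH; case: k {IH} => [|k] //=; lia.
Qed.

Section SpecialWords.

Variable M : nat.

Lemma ascent_shift i k : (0 < i < k)%N -> (k < M)%N ->
  braid_eq M ((i.+1, true) :: ascent k) (ascent k ++ [:: (i, true)]).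
Proof.
elim: k => [|k IH] /andP[i_gt0 lt_ik] lt_kM; first by [].
rewrite /= -catA /=; have [lt_ik' | le_ki] := ltnP i k.
- apply: braid_eq_trans (braid_eq_catr _ (IH _ _)) _; [lia | lia |].
  by rewrite -catA; apply: braid_eq_catl; apply: braid_eq_far; lia.
- have eq_ki : k = i by lia.
  subst k; case: i i_gt0 {lt_ik IH le_ki} lt_kM => [|i] // _ lt_iM.
  rewrite /= -catA /=.
  have far_i2 : braid_eq M ((i.+2, true) :: ascent i) (ascent i ++ [:: (i.+2, true)]).
    by apply: braid_eq_far_word; rewrite ?wf_ascent ?far_from_wf ?wf_ascent //; lia.
  apply: braid_eq_trans (braid_eq_catr [:: (i.+1, true); (i.+2, true)] far_i2) _.
  rewrite -!catA /=; apply: braid_eq_catl.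
  by apply: braid_eq_sym; apply: braid_eq_three; lia.
Qed.

Lemma descent_shift j k : (0 < j < k)%N -> (k < M)%N ->
  braid_eq M ((j, true) :: descent k) (descent k ++ [:: (j.+1, true)]).
Proof.
elim: k => [|k IH] /andP[j_gt0 lt_jk] lt_kM; first by [].
rewrite /=; have [lt_jk' | le_kj] := ltnP j k.
- apply: braid_eq_trans (braid_eq_catr (descent k) (braid_eq_far _ _ j_gt0 _ lt_kM)) _;
    first lia.
  by apply: braid_eq_cons; apply: IH; lia.
- have eq_kj : k = j by lia.
  subst k; case: j j_gt0 {lt_jk IH le_kj} lt_kM => [|j] // _ lt_jM.
  apply: braid_eq_trans (braid_eq_catr (descent j) (braid_eq_three _ _)) _; try lia.
  do 2 apply: braid_eq_cons.
  by apply: braid_eq_far_word; rewrite ?wf_descent ?far_from_wf ?wf_descent //; lia.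
Qed.

Lemma jucys_murphy_letter i e k : (0 < i < k)%N -> (k < M)%N ->
  braid_eq M ((i, e) :: jucys_murphy k) (jucys_murphy k ++ [:: (i, e)]).
Proof.
move=> lt_0ik lt_kM.
have pos : braid_eq M ((i, true) :: jucys_murphy k) (jucys_murphy k ++ [:: (i, true)]).
  rewrite jucys_murphyE.
  apply: braid_eq_trans (braid_eq_catr (ascent k) (descent_shift lt_0ik lt_kM)) _.
  rewrite -!catA /=; apply: braid_eq_catl.
  by apply: ascent_shift.
case: e; first exact: pos.
have lt_0iM : (0 < i < M)%N by lia.
have cancel_i b : braid_eq M [:: (i, b); (i, ~~ b)] [::] := braid_eq_cancel b lt_0iM.
(* insert [sigma_i sigma_i^-1] at the end, move [sigma_i] to the front and cancel *)
have insert : braid_eq M ((i, false) :: jucys_murphy k)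
                        ((i, false) :: jucys_murphy k ++ [:: (i, true); (i, false)]).
  by have := braid_eq_cat ((i, false) :: jucys_murphy k) [::] (braid_eq_sym (cancel_i true));
    rewrite !cats0.
have move_front := braid_eq_cat [:: (i, false)] [:: (i, false)] (braid_eq_sym pos).
rewrite /= -catA /= in move_front.
apply: braid_eq_trans insert (braid_eq_trans move_front _).
exact: (braid_eq_cat [::] (jucys_murphy k ++ [:: (i, false)]) (cancel_i false)).
Qed.

Lemma jucys_murphy_central k y : (k < M)%N -> wf_bword k y ->
  braid_eq M (y ++ jucys_murphy k) (jucys_murphy k ++ y).
Proof.
move=> lt_kM; elim: y => [|[i e] y IH]; first by rewrite cats0 => _; apply: braid_eq_refl.
rewrite wf_bword_cons => /and3P[/= i_gt0 lt_ik wy].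
apply: braid_eq_trans (braid_eq_cons _ (IH wy)) _.
have := braid_eq_catr y (@jucys_murphy_letter i e k _ lt_kM).
by rewrite -catA; apply; rewrite i_gt0.
Qed.

Lemma garside_descent k : (k < M)%N -> braid_eq M (garside k.+1) (garside k ++ descent k).
Proof.
elim: k => [|k IH] lt_kM; first by apply: braid_eq_refl.
rewrite garsideS.
apply: braid_eq_trans (braid_eq_catl _ (IH (ltnW lt_kM))) _.
rewrite garsideS /= -!catA /=; apply: braid_eq_catl.
have far_k : braid_eq M ((k.+1, true) :: garside k) (garside k ++ [:: (k.+1, true)]).
  apply: braid_eq_far_word; rewrite ?lt_kM ?far_from_wf ?wf_garside //.
  by apply: wf_bword_widen (wf_garside k); lia.
by have := braid_eq_catr (descent k) far_k; rewrite -catA.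
Qed.

Lemma garside_sq k : (k < M)%N ->
  braid_eq M (garside k.+1 ++ garside k.+1) (garside k ++ garside k ++ jucys_murphy k).
Proof.
move=> lt_kM; rewrite {2}garsideS.
apply: braid_eq_trans (braid_eq_catr _ (garside_descent lt_kM)) _.
rewrite -catA; apply: braid_eq_catl; rewrite catA -jucys_murphyE.
by apply: braid_eq_sym; apply: jucys_murphy_central => //; apply: wf_garside.
Qed.

End SpecialWords.

Ltac split_wf :=
  repeat match goal with
  | H : is_true (wf_bword _ (_ ++ _)) |- _ => rewrite wf_bword_cat in H
  | H : is_true (wf_bword _ (_ :: _)) |- _ => rewrite wf_bword_cons /= in H
  | H : is_true (_ && _) |- _ => case/andP: H => ? ?
  end.

Ltac solve_wf :=
  split_wf; rewrite ?(wf_bword_cat, wf_bword_cons) /=; repeat (apply/andP; split);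
  first [ done
        | match goal with
          | H : is_true (wf_bword _ ?u) |- is_true (wf_bword _ ?u) =>
              apply: wf_bword_widen H; lia
          end
        | apply: wf_jucys_murphy; lia
        | apply: wf_bword_widen (wf_garside _); lia
        | lia ].

Definition skein_closed (M : nat) (Q : bword -> Prop) : Prop :=
  (forall x y, braid_eq M x y -> wf_bword M x -> Q x -> Q y) /\
  (forall u w i e, wf_bword M (u ++ (i, e) :: w) ->
     Q (u ++ (i, ~~ e) :: w) -> Q (u ++ w) -> Q (u ++ (i, e) :: w)).

Definition occ (s : nat) (y : bword) : nat := count (fun g : letter => g.1 == s) y.

Lemma occ_cat s u w : occ s (u ++ w) = (occ s u + occ s w)%N.
Proof. exact: count_cat. Qed.

Lemma occ_cons s i e w : occ s ((i, e) :: w) = ((i == s) + occ s w)%N.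
Proof. by []. Qed.

Lemma occ_wf s y : wf_bword s y -> occ s y = 0%N.
Proof.
elim: y => [|[i e] y IH] //; rewrite wf_bword_cons occ_cons => /and3P[_ /= lt_is /IH ->].
by rewrite ltn_eqF.
Qed.

Lemma wf_bword_occ0 s y : wf_bword s.+1 y -> occ s y = 0%N -> wf_bword s y.
Proof.
elim: y => [|[i e] y IH] //; rewrite !wf_bword_cons occ_cons /=.
case/and3P=> -> lt_is wy; case: eqP => //= ne_is /IH ->; rewrite ?andbT //; lia.
Qed.

Lemma split_first_occ s y : (0 < occ s y)%N ->
  exists a e r, y = a ++ (s, e) :: r /\ occ s a = 0%N.
Proof.
elim: y => [|[i e] y IH] //; rewrite occ_cons; case: eqP => [-> _ | ne_is /IH].
  by exists [::], e, y.
case=> a [e' [r [-> occ_a]]]; exists ((i, e) :: a), e', r.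
by rewrite occ_cons occ_a; move/eqP/negbTE: ne_is => ->.
Qed.

Section SkeinInductionStep.

Variables (m : nat) (Q : bword -> Prop).
Hypothesis Q_closed : skein_closed m.+2 Q.
Hypothesis Q_one : forall a b, wf_bword m.+1 a -> wf_bword m.+1 b ->
  Q (a ++ (m.+1, true) :: b).
Hypothesis skein_induction_lower : forall Q' : bword -> Prop,
  skein_closed m.+1 Q' -> (forall a, wf_bword m a -> Q' a) ->
  ((0 < m)%N -> forall a b, wf_bword m a -> wf_bword m b -> Q' (a ++ (m, true) :: b)) ->
  forall y, wf_bword m.+1 y -> Q' y.
Variable n : nat.
Hypothesis Q_few : forall y, wf_bword m.+2 y -> (occ m.+1 y <= n)%N -> Q y.

Let Q_braid x y : braid_eq m.+2 x y -> wf_bword m.+2 x -> Q x -> Q y.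
Proof. by case: Q_closed => braid _; apply: braid. Qed.

Let Q_switch u w i e : wf_bword m.+2 (u ++ (i, e) :: w) ->
  (occ m.+1 (u ++ w) <= n)%N -> Q (u ++ (i, ~~ e) :: w) -> Q (u ++ (i, e) :: w).
Proof.
case: Q_closed => _ switch wy few Qflip; apply: switch (wy) Qflip _.
by apply: Q_few few; solve_wf.
Qed.

Let Q_sign u w i e : wf_bword m.+2 (u ++ (i, e) :: w) ->
  (occ m.+1 (u ++ w) <= n)%N -> Q (u ++ (i, true) :: w) -> Q (u ++ (i, e) :: w).
Proof. by case: e => // wy few; apply: (Q_switch wy few). Qed.

Let comm_top c : wf_bword m c -> braid_eq m.+2 ((m.+1, true) :: c) (c ++ [:: (m.+1, true)]).
Proof. by move=> wc; apply: braid_eq_far_word; [lia | solve_wf | exact: far_from_wf]. Qed.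

(* [sigma sigma] is resolved by the skein relation into [sigma sigma^-1 = 1] and a single [sigma]. *)
Let Q_two_lower a c d : wf_bword m.+1 a -> wf_bword m c -> wf_bword m.+2 d ->
  (occ m.+1 d < n)%N -> Q (a ++ (m.+1, true) :: c ++ (m.+1, true) :: d).
Proof.
move=> wa wc wd few_d.
have [occ_a occ_c] : occ m.+1 a = 0%N /\ occ m.+1 c = 0%N by split; apply: occ_wf; solve_wf.
have Q_cancel : Q ((a ++ c) ++ (m.+1, false) :: (m.+1, true) :: d).
  have cancel_top : braid_eq m.+2 [:: (m.+1, false); (m.+1, true)] [::].
    by apply: (braid_eq_cancel false); lia.
  apply: Q_braid (Q_few (y := a ++ c ++ d) _ _); [ | solve_wf | solve_wf | ].
    by apply: braid_eq_sym; rewrite catA; exact (braid_eq_cat (a ++ c) d cancel_top).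
  by rewrite !occ_cat occ_a occ_c; lia.
have := braid_eq_catr ((m.+1, true) :: d) (braid_eq_catl a (comm_top wc)).
rewrite -!catA /= => /braid_eq_sym move_top; apply: Q_braid move_top _ _; first by solve_wf.
have := Q_switch (u := a ++ c) (w := (m.+1, true) :: d) (i := m.+1) (e := true).
rewrite -!catA; apply; first by solve_wf.
  by rewrite !occ_cat occ_a occ_c occ_cons eqxx; lia.
by rewrite -catA in Q_cancel.
Qed.

(* [sigma_{m+1} sigma_m sigma_{m+1} = sigma_m sigma_{m+1} sigma_m] has one [sigma_{m+1}] fewer. *)
Let Q_two_one a a' b' d : (0 < m)%N -> wf_bword m.+1 a -> wf_bword m a' -> wf_bword m b' ->
  wf_bword m.+2 d -> (occ m.+1 d < n)%N ->
  Q (a ++ (m.+1, true) :: (a' ++ (m, true) :: b') ++ (m.+1, true) :: d).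
Proof.
move=> m_gt0 wa wa' wb' wd few_d.
pose Z := a ++ a' ++ [:: (m, true); (m.+1, true); (m, true)] ++ b' ++ d.
have QZ : Q Z.
  apply: Q_few; first by solve_wf.
  have [occ_a [occ_a' occ_b']] : [/\ occ m.+1 a = 0%N, occ m.+1 a' = 0%N & occ m.+1 b' = 0%N].
    by split; apply: occ_wf; solve_wf.
  by rewrite /Z !occ_cat !occ_cons occ_a occ_a' occ_b' eqxx ltn_eqF //=; lia.
apply: Q_braid QZ; last by solve_wf.
rewrite /Z -catA.
have braid3 := braid_eq_cat (a ++ a') (b' ++ d) (braid_eq_three (M := m.+2) m_gt0 (ltnSn _)).
rewrite -!catA /= in braid3; apply: braid_eq_trans braid3 _.
have far_b' := braid_eq_cat (a ++ a' ++ [:: (m.+1, true); (m, true)]) d (comm_top wb').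
rewrite -!catA /= in far_b'; apply: braid_eq_trans far_b' _.
have far_a' := braid_eq_cat a ((m, true) :: b' ++ (m.+1, true) :: d) (comm_top wa').
by rewrite -!catA /= in far_a' *; apply: braid_eq_sym.
Qed.

Let Q_two a c d : wf_bword m.+1 a -> wf_bword m.+1 c -> wf_bword m.+2 d ->
  (occ m.+1 d < n)%N -> Q (a ++ (m.+1, true) :: c ++ (m.+1, true) :: d).
Proof.
move=> wa wc wd few_d.
pose Q' c := Q (a ++ (m.+1, true) :: c ++ (m.+1, true) :: d).
apply: (skein_induction_lower (Q' := Q')) wc => [| c' wc' | m_gt0 a' b' wa' wb'].
- split=> [x y xy wx | u w i e wuw].
    apply: Q_braid; last by solve_wf.
    have := braid_eq_cat (a ++ [:: (m.+1, true)]) ((m.+1, true) :: d)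
                         (braid_eq_widen (leqnSn _) xy).
    by rewrite -!catA.
  have reassoc X : a ++ (m.+1, true) :: (u ++ X) ++ (m.+1, true) :: d =
                   (a ++ (m.+1, true) :: u) ++ X ++ (m.+1, true) :: d by rewrite -!catA.
  rewrite /Q' !reassoc; case: Q_closed => _; apply.
  by solve_wf.
- exact: Q_two_lower.
- exact: Q_two_one.
Qed.

Lemma skein_induction_step y : wf_bword m.+2 y -> (occ m.+1 y <= n.+1)%N -> Q y.
Proof.
move=> wy; rewrite leq_eqVlt ltnS => /orP[/eqP occ_y | ]; last exact: Q_few.
have [a [e [r [def_y occ_a]]]] : exists a e r, y = a ++ (m.+1, e) :: r /\ occ m.+1 a = 0%N.
  by apply: split_first_occ; rewrite occ_y.
subst y; have wa : wf_bword m.+1 a by apply: wf_bword_occ0; solve_wf.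
have occ_r : occ m.+1 r = n by move: occ_y; rewrite occ_cat occ_a occ_cons eqxx; lia.
case: (posnP n) => [n0 | n_gt0].
  have wr : wf_bword m.+1 r by apply: wf_bword_occ0; rewrite ?occ_r //; solve_wf.
  apply: Q_sign => //; first by rewrite occ_cat occ_a occ_r n0.
  exact: Q_one.
have [c [f [d [def_r occ_c]]]] : exists c f d, r = c ++ (m.+1, f) :: d /\ occ m.+1 c = 0%N.
  by apply: split_first_occ; rewrite occ_r.
subst r; have wc : wf_bword m.+1 c by apply: wf_bword_occ0; solve_wf.
have occ_d : occ m.+1 d = n.-1 by move: occ_r; rewrite occ_cat occ_c occ_cons eqxx; lia.
have -> : a ++ (m.+1, e) :: c ++ (m.+1, f) :: d = (a ++ (m.+1, e) :: c) ++ (m.+1, f) :: d.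
  by rewrite -catA.
apply: Q_sign; first by rewrite -catA.
  by rewrite !occ_cat occ_a occ_cons eqxx occ_c occ_d; lia.
rewrite -catA; apply: Q_sign; first by solve_wf.
  by rewrite !occ_cat occ_c occ_a occ_cons eqxx occ_d; lia.
apply: Q_two => //; last by rewrite occ_d; lia.
by solve_wf.
Qed.

End SkeinInductionStep.

Lemma skein_induction m (Q : bword -> Prop) : skein_closed m.+1 Q ->
  (forall a, wf_bword m a -> Q a) ->
  ((0 < m)%N -> forall a b, wf_bword m a -> wf_bword m b -> Q (a ++ (m, true) :: b)) ->
  forall y, wf_bword m.+1 y -> Q y.
Proof.
elim: m Q => [|m IHm] Q Q_closed Q_lower Q_one y wy.
  by rewrite (wf_bword1 wy); apply: Q_lower.
suff Q_occ n : forall y, wf_bword m.+2 y -> (occ m.+1 y <= n)%N -> Q y.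
  exact: Q_occ (occ m.+1 y) y wy (leqnn _).
elim: n => [|n IHn] {}y {}wy occ_y.
  by apply: Q_lower; apply: wf_bword_occ0 wy _; lia.
exact: (skein_induction_step Q_closed (Q_one isT) IHm IHn wy occ_y).
Qed.

Definition skein_coef (M : nat) (C : bword -> int -> int) : Prop :=
  (forall x y, braid_eq M x y -> wf_bword M x -> C x =1 C y) /\
  (forall u w i, wf_bword M (u ++ (i, true) :: w) -> forall k,
     C (u ++ (i, true) :: w) k = C (u ++ (i, false) :: w) k + C (u ++ w) (k - 1)).

Section SkeinCoef.

Variable M : nat.

Lemma wf_bword_sign u w i e e' :
  wf_bword M (u ++ (i, e) :: w) = wf_bword M (u ++ (i, e') :: w).
Proof. by rewrite !wf_bword_cat !wf_bword_cons. Qed.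

Lemma skein_closed_eq C D : skein_coef M C -> skein_coef M D ->
  skein_closed M (fun y => C y =1 D y).
Proof.
move=> [C_braid C_skein] [D_braid D_skein]; split=> [x y xy wx eqCD | u w i e wy eqCD eqCD'] k.
  by rewrite -(C_braid _ _ xy wx) -(D_braid _ _ xy wx).
rewrite (wf_bword_sign _ _ _ _ true) in wy.
move: (C_skein _ _ _ wy k) (D_skein _ _ _ wy k); rewrite eqCD'.
case: e eqCD => eqCD; first by move=> -> ->; rewrite eqCD.
by rewrite eqCD => -> /addIr.
Qed.

Lemma skein_closed_all (I : Type) (Q : I -> bword -> Prop) :
  (forall t, skein_closed M (Q t)) -> skein_closed M (fun y => forall t, Q t y).
Proof.
move=> Q_closed; split=> [x y xy wx Qx t | u w i e wy Qy Qy' t].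
  by case: (Q_closed t) => braid _; apply: braid xy wx (Qx t).
by case: (Q_closed t) => _ switch; apply: switch wy (Qy t) (Qy' t).
Qed.

Lemma skein_closed_impl (A : Prop) (Q : bword -> Prop) :
  skein_closed M Q -> skein_closed M (fun y => A -> Q y).
Proof.
case=> braid switch; split=> [x y xy wx Qx a | u w i e wy Qy Qy' a].
  exact: braid xy wx (Qx a).
exact: switch wy (Qy a) (Qy' a).
Qed.

Lemma skein_coef0 : skein_coef M (fun _ _ => 0).
Proof. by split=> // *; rewrite addr0. Qed.

Lemma skein_coef_scale C (r : int) : skein_coef M C -> skein_coef M (fun y k => r * C y k).
Proof.
case=> C_braid C_skein; split=> [x y xy wx k | u w i wy k]; first by rewrite (C_braid _ _ xy wx).
by rewrite C_skein // mulrDr.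
Qed.

Lemma skein_coef_opp C : skein_coef M C -> skein_coef M (fun y k => - C y k).
Proof.
case=> C_braid C_skein; split=> [x y xy wx k | u w i wy k]; first by rewrite (C_braid _ _ xy wx).
by rewrite C_skein // opprD.
Qed.

Lemma skein_coef_shift C (t : int) : skein_coef M C -> skein_coef M (fun y k => C y (k + t)).
Proof.
case=> C_braid C_skein; split=> [x y xy wx k | u w i wy k]; first by rewrite (C_braid _ _ xy wx).
by rewrite C_skein // addrAC.
Qed.

Lemma skein_coef_catr C w : wf_bword M w -> skein_coef M C ->
  skein_coef M (fun y => C (y ++ w)).
Proof.
move=> ww [C_braid C_skein]; split=> [x y xy wx k | u v i wy k].
  by apply: C_braid; [apply: braid_eq_catr | rewrite wf_bword_cat wx].
by rewrite -!catA /= C_skein // -cat_cons catA wf_bword_cat wy.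
Qed.

End SkeinCoef.

Lemma skein_coef_widen M M' C : (M <= M')%N -> skein_coef M' C -> skein_coef M C.
Proof.
move=> le_MM' [C_braid C_skein]; split=> [x y xy wx | u w i wy].
  by apply: C_braid (braid_eq_widen le_MM' xy) (wf_bword_widen le_MM' wx).
exact: C_skein (wf_bword_widen le_MM' wy).
Qed.

Section Homfly.

Variable P : nat -> bword -> laurent2.
Hypothesis HP : is_homfly_of_closures P.

Lemma homfly_braid_eq M x y : braid_eq M x y -> wf_bword M x -> P M x = P M y.
Proof.
case: HP => P_move _ _ _ _.
elim=> [u x' y' w mv wx wy | // | x' y' xy IH | x' y' z xy IH1 _ IH2] wx'.
- by apply: P_move mv => //; move: wx'; rewrite !wf_bword_cat wx wy.
- by rewrite IH // (braid_eq_wf xy).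
- by rewrite IH1 // IH2 // -(braid_eq_wf xy).
Qed.

Lemma homfly_catC M u w : wf_bword M (u ++ w) -> P M (u ++ w) = P M (w ++ u).
Proof. by case: HP => _ P_conj _ _ _; apply: P_conj. Qed.

Lemma homfly_skein M u w i a k : wf_bword M (u ++ (i, true) :: w) ->
  P M (u ++ (i, true) :: w) a k =
  P M (u ++ (i, false) :: w) (a - 2) k + P M (u ++ w) (a - 1) (k - 1).
Proof.
case: HP => _ _ _ P_skein _ wy; have := P_skein M u w i wy (a - 1) k.
have [-> ->] : a - 1 + 1 = a /\ a - 1 - 1 = a - 2 by split; lia.
by move=> <-; rewrite addrC subrK.
Qed.

(* The skein relation at the stabilising crossing of [x sigma_M^{+-1}] gives
   [P (x on M.+1 strands) = (v^-1 - v) / z * P x]. *)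
Lemma homfly_unstab M x a k : (0 < M)%N -> wf_bword M x ->
  P M.+1 x a k = P M x (a + 1) (k + 1) - P M x (a - 1) (k + 1).
Proof.
case: HP => _ _ P_stab P_skein _ M_gt0 wx.
have wx_stab : wf_bword M.+1 (x ++ [:: (M, true)]).
  by rewrite wf_bword_cat (wf_bword_widen (leqnSn M) wx) wf_bword_cons M_gt0 ltnSn.
have := P_skein M.+1 x [::] M wx_stab a (k + 1).
by rewrite !cats1 !P_stab // cats0 addrK => <-.
Qed.

Lemma homfly_destab_cat M a b e : (0 < M)%N -> wf_bword M a -> wf_bword M b ->
  P M.+1 (a ++ (M, e) :: b) = P M (b ++ a).
Proof.
case: HP => _ P_conj P_stab _ _ M_gt0 wa wb.
rewrite -cat1s catA P_conj; last by solve_wf.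
by rewrite catA cats1 P_stab //; solve_wf.
Qed.

Definition coef_at (M : nat) (t : int) (y : bword) (k : int) : int :=
  P M y (exp_sum y + t) k.

Lemma skein_coef_at M t : skein_coef M (coef_at M t).
Proof.
split=> [x y xy wx k | u w i wy k].
  by rewrite /coef_at (homfly_braid_eq xy wx) (braid_eq_exp_sum xy).
rewrite /coef_at homfly_skein // !exp_sum_insert /=.
by congr (P _ _ _ _ + P _ _ _ _); ring.
Qed.

Lemma coef_at_catC M u w t k : wf_bword M (u ++ w) ->
  coef_at M t (u ++ w) k = coef_at M t (w ++ u) k.
Proof. by move=> wy; rewrite /coef_at homfly_catC // exp_sum_catC. Qed.

Lemma coef_at_braid_eq M x y t k : braid_eq M x y -> wf_bword M x ->
  coef_at M t x k = coef_at M t y k.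
Proof. by move=> xy wx; case: (skein_coef_at M t) => braid _; apply: braid. Qed.

Lemma coef_at_skein M t u w i k : wf_bword M (u ++ (i, true) :: w) ->
  coef_at M t (u ++ (i, true) :: w) k =
  coef_at M t (u ++ (i, false) :: w) k + coef_at M t (u ++ w) (k - 1).
Proof. by move=> wy; case: (skein_coef_at M t) => _ skein; apply: skein wy k. Qed.

Lemma coef_at_unstab M t x k : (0 < M)%N -> wf_bword M x ->
  coef_at M.+1 t x k = coef_at M (t + 1) x (k + 1) - coef_at M (t - 1) x (k + 1).
Proof. by move=> M_gt0 wx; rewrite /coef_at homfly_unstab // !addrA. Qed.

Lemma coef_at_destab_cat M t a b e k : (0 < M)%N -> wf_bword M a -> wf_bword M b ->
  coef_at M.+1 t (a ++ (M, e) :: b) k = coef_at M (t + if e then 1 else -1) (b ++ a) k.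
Proof.
move=> M_gt0 wa wb; rewrite /coef_at homfly_destab_cat // exp_sum_insert exp_sum_catC.
by rewrite addrAC addrA.
Qed.

(* The Morton-Franks-Williams inequality: [P M x] only involves the powers
   [v^a] with [e - M + 1 <= a <= e + M - 1], where [e] is the exponent sum of [x]. *)
Lemma homfly_v_support M x t k : (0 < M)%N -> wf_bword M x ->
  (t < 1 - M%:Z) || (M%:Z - 1 < t) -> coef_at M t x k = 0.
Proof.
case: M => [//|m] _; elim: m x t k => [|m IH] x t k wx out_t.
  case: HP => _ _ _ _ P_unknot; rewrite (wf_bword1 wx) /coef_at P_unknot exp_sum_nil add0r.
  by rewrite /laurent_one (_ : t == 0 = false) //; apply/eqP; lia.
pose out s := (s < 1 - m.+2%:Z) || (m.+2%:Z - 1 < s).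
suff Q_all : forall y, wf_bword m.+2 y -> forall s, out s -> coef_at m.+2 s y =1 (fun _ => 0).
  exact: Q_all.
apply: skein_induction => [| y wy s out_s k' | _ a b wa wb s out_s k'].
- apply: skein_closed_all => s; apply: skein_closed_impl.
  exact: skein_closed_eq (skein_coef_at _ _) (skein_coef0 _).
- by rewrite coef_at_unstab // !IH ?subrr //; move: out_s; rewrite /out; lia.
- by rewrite coef_at_destab_cat // IH //; [solve_wf | move: out_s; rewrite /out; lia].
Qed.

Local Notation top_coef M := (coef_at M (M%:Z - 1)).
Local Notation bottom_coef M := (coef_at M (1 - M%:Z)).

Lemma top_coef_unstab M x k : (0 < M)%N -> wf_bword M x ->
  top_coef M.+1 x k = - top_coef M x (k + 1).
Proof.
move=> M_gt0 wx; rewrite coef_at_unstab // homfly_v_support //; last by lia.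
by rewrite sub0r; congr (- coef_at _ _ _ _); lia.
Qed.

Lemma bottom_coef_unstab M x k : (0 < M)%N -> wf_bword M x ->
  bottom_coef M.+1 x k = bottom_coef M x (k + 1).
Proof.
move=> M_gt0 wx; rewrite coef_at_unstab // [X in _ - X]homfly_v_support //.
  by rewrite subr0; congr (coef_at _ _ _ _); lia.
by lia.
Qed.

Lemma top_coef_destab_cat M a b k : (0 < M)%N -> wf_bword M a -> wf_bword M b ->
  top_coef M.+1 (a ++ (M, true) :: b) k = 0.
Proof.
move=> M_gt0 wa wb; rewrite coef_at_destab_cat // homfly_v_support //.
  by solve_wf.
by lia.
Qed.

Lemma bottom_coef_destab_cat M a b k : (0 < M)%N -> wf_bword M a -> wf_bword M b ->
  bottom_coef M.+1 (a ++ (M, true) :: b) k = bottom_coef M (b ++ a) k.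
Proof.
move=> M_gt0 wa wb; rewrite coef_at_destab_cat //.
by congr (coef_at _ _ _ _); lia.
Qed.

Lemma top_coef_jucys_murphy_snoc N y k : (0 < N)%N -> wf_bword N y ->
  top_coef N.+1 (y ++ jucys_murphy N ++ [:: (N, true)]) k =
  top_coef N.+1 (y ++ jucys_murphy N) (k - 1).
Proof.
case: N => [//|N] _ wy; rewrite [jucys_murphy _.+1]/=.
have wJ : wf_bword N.+1 (jucys_murphy N) by apply: wf_jucys_murphy.
pose u := y ++ (N.+1, true) :: jucys_murphy N.
have -> : y ++ ((N.+1, true) :: jucys_murphy N ++ [:: (N.+1, true)]) ++ [:: (N.+1, true)] =
          (u ++ [:: (N.+1, true)]) ++ (N.+1, true) :: [::] by rewrite /u -!catA /= -!catA.
have -> : y ++ (N.+1, true) :: jucys_murphy N ++ [:: (N.+1, true)] =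
          u ++ [:: (N.+1, true)] by rewrite /u -!catA.
rewrite coef_at_skein; last by rewrite /u; solve_wf.
rewrite cats0 -[RHS]add0r; congr (_ + _).
have cancel_top : braid_eq N.+2 [:: (N.+1, true); (N.+1, false)] [::].
  by apply: (braid_eq_cancel true); lia.
have cancel_u : braid_eq N.+2 (u ++ [:: (N.+1, true); (N.+1, false)]) u.
  by have := braid_eq_catl u cancel_top; rewrite cats0.
rewrite -catA (coef_at_braid_eq _ _ cancel_u); last by rewrite /u; solve_wf.
exact: top_coef_destab_cat.
Qed.

Lemma top_coef_jucys_murphy_step m :
  (forall y, wf_bword m y -> top_coef m.+1 (y ++ jucys_murphy m) =1 top_coef m.+1 y) ->
  forall y, wf_bword m.+1 y ->
    top_coef m.+2 (y ++ jucys_murphy m.+1) =1 (fun k => - top_coef m.+1 y (k + 1)).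
Proof.
move=> jm_lower; have wJ : wf_bword m.+2 (jucys_murphy m.+1) by apply: wf_jucys_murphy.
apply: skein_induction => [| y wy k | m_gt0 a b wa wb k].
- apply: skein_closed_eq.
    exact: skein_coef_widen (leqnSn _) (skein_coef_catr wJ (skein_coef_at _ _)).
  exact: skein_coef_opp (skein_coef_shift _ (skein_coef_at _ _)).
- have wJm : wf_bword m.+1 (jucys_murphy m) by apply: wf_jucys_murphy.
  have far_y : braid_eq m.+2 ((m.+1, true) :: y) (y ++ [:: (m.+1, true)]).
    by apply: braid_eq_far_word; [lia | solve_wf | exact: far_from_wf].
  have -> : top_coef m.+2 (y ++ jucys_murphy m.+1) k =
            top_coef m.+2 (y ++ (m.+1, true) :: (m.+1, true) :: jucys_murphy m) k.
    rewrite [jucys_murphy _.+1]/= -cat_cons catA coef_at_catC; last by solve_wf.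
    rewrite /= (coef_at_braid_eq _ _ (braid_eq_catr ((m.+1, true) :: jucys_murphy m) far_y)).
      by rewrite -catA.
    by solve_wf.
  have top0 : top_coef m.+2 (y ++ (m.+1, true) :: jucys_murphy m) (k - 1) = 0.
    by apply: top_coef_destab_cat => //; solve_wf.
  rewrite coef_at_skein; last by solve_wf.
  rewrite top0 addr0.
  have cancel_top : braid_eq m.+2 [:: (m.+1, false); (m.+1, true)] [::].
    by apply: (braid_eq_cancel false); lia.
  rewrite (coef_at_braid_eq _ _ (braid_eq_cat y (jucys_murphy m) cancel_top)); last by solve_wf.
  by rewrite top_coef_unstab ?jm_lower //; solve_wf.
- rewrite top_coef_destab_cat // oppr0 [jucys_murphy _.+1]/=.
  have wJm : wf_bword m.+1 (jucys_murphy m) by apply: wf_jucys_murphy.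
  have far_top c : wf_bword m c ->
      braid_eq m.+2 ((m.+1, true) :: c) (c ++ [:: (m.+1, true)]).
    by move=> wc; apply: braid_eq_far_word; [lia | solve_wf | exact: far_from_wf].
  have -> : (a ++ (m, true) :: b) ++ (m.+1, true) :: jucys_murphy m ++ [:: (m.+1, true)] =
            (a ++ (m, true) :: b ++ (m.+1, true) :: jucys_murphy m) ++ [:: (m.+1, true)].
    by rewrite -!catA /= -!catA.
  rewrite coef_at_catC; last by solve_wf.
  have braid_top : braid_eq m.+2
      ((m.+1, true) :: a ++ (m, true) :: b ++ (m.+1, true) :: jucys_murphy m)
      ((a ++ [:: (m, true)]) ++ (m.+1, true) :: (m, true) :: b ++ jucys_murphy m).
    apply: braid_eq_trans (braid_eq_catr _ (far_top _ wa)) _.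
    rewrite -!catA /=; apply: braid_eq_catl.
    have := braid_eq_cat [:: (m.+1, true); (m, true)] (jucys_murphy m)
                         (braid_eq_sym (far_top _ wb)).
    rewrite -catA /= => far_b; apply: braid_eq_trans far_b _.
    exact: (braid_eq_cat [::] (b ++ jucys_murphy m) (braid_eq_sym (braid_eq_three m_gt0 _))).
  rewrite (coef_at_braid_eq _ _ braid_top); last by solve_wf.
  by apply: top_coef_destab_cat => //; solve_wf.
Qed.

Lemma top_coef_cat_jucys_murphy m y : wf_bword m y ->
  top_coef m.+1 (y ++ jucys_murphy m) =1 top_coef m.+1 y.
Proof.
elim: m y => [|m IH] y wy k; first by rewrite cats0.
by rewrite (top_coef_jucys_murphy_step IH wy) [RHS]top_coef_unstab.
Qed.

Lemma bottom_coef_full_twist m beta : wf_bword m.+1 beta ->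
  bottom_coef m.+1 beta =1
  (fun k => (-1) ^+ m * top_coef m.+1 (beta ++ garside m.+1 ++ garside m.+1) k).
Proof.
elim: m beta => [|m IH] beta wb.
  by move=> k; rewrite (wf_bword1 wb) expr0 mul1r.
have wD : wf_bword m.+2 (garside m.+2 ++ garside m.+2) by solve_wf.
have twist_sq y : wf_bword m.+2 y -> top_coef m.+2 (y ++ garside m.+2 ++ garside m.+2) =1
                   top_coef m.+2 ((y ++ garside m.+1 ++ garside m.+1) ++ jucys_murphy m.+1).
  move=> wy k; rewrite -!catA; apply: coef_at_braid_eq; last by solve_wf.
  exact/braid_eq_catl/garside_sq.
move: beta wb; apply: skein_induction => [| a wa k | _ a b wa wb k].
- apply: skein_closed_eq; first exact: skein_coef_at.
  exact: skein_coef_scale (skein_coef_catr wD (skein_coef_at _ _)).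
- rewrite bottom_coef_unstab // IH // twist_sq; last by solve_wf.
  rewrite top_coef_cat_jucys_murphy; last by solve_wf.
  by rewrite [X in _ = _ * X]top_coef_unstab ?exprS ?mulNr ?mulrN //; solve_wf.
- rewrite bottom_coef_destab_cat // coef_at_catC; last by solve_wf.
  rewrite IH; last by solve_wf.
  rewrite twist_sq; last by solve_wf.
  pose D1 := garside m.+1 ++ garside m.+1.
  have wJ : wf_bword m.+2 (jucys_murphy m.+1) by apply: wf_jucys_murphy.
  have -> : ((a ++ (m.+1, true) :: b) ++ D1) ++ jucys_murphy m.+1 =
            (a ++ [:: (m.+1, true)]) ++ b ++ D1 ++ jucys_murphy m.+1 by rewrite -!catA.
  rewrite [X in _ = _ * X]coef_at_catC; last by rewrite /D1; solve_wf.
  have J_a : braid_eq m.+2 ((b ++ D1 ++ jucys_murphy m.+1) ++ a ++ [:: (m.+1, true)])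
                         ((b ++ D1 ++ a) ++ jucys_murphy m.+1 ++ [:: (m.+1, true)]).
    have := braid_eq_cat (b ++ D1) [:: (m.+1, true)]
              (braid_eq_sym (jucys_murphy_central (ltnSn m.+1) wa)).
    by rewrite -!catA.
  rewrite (coef_at_braid_eq _ _ J_a); last by rewrite /D1; solve_wf.
  rewrite top_coef_jucys_murphy_snoc //; last by rewrite /D1; solve_wf.
  rewrite top_coef_cat_jucys_murphy; last by rewrite /D1; solve_wf.
  rewrite [X in _ = _ * X]top_coef_unstab //; last by rewrite /D1; solve_wf.
  rewrite subrK (catA b) [X in _ = _ * - X]coef_at_catC; last by rewrite /D1; solve_wf.
  by rewrite /D1 -!catA exprS; ring.
Qed.

End Homfly.

Theorem theorem1p5 (P : nat -> bword -> laurent2) (HP : is_homfly_of_closures P)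
    (n : nat) (beta : bword) :
  (1 <= n)%N -> wf_bword n beta ->
  forall k : int,
    P n beta (exp_sum beta - n%:Z + 1) k =
    (-1) ^+ n.-1 *
      P n (beta ++ garside n ++ garside n) (exp_sum beta + (n ^ 2)%:Z - 1) k.
Proof.
case: n => [//|m] _ wb k.
have := bottom_coef_full_twist HP wb k; rewrite /coef_at /= => twist.
have -> : exp_sum beta - m.+1%:Z + 1 = exp_sum beta + (1 - m.+1%:Z) by rewrite addrAC addrA.
rewrite twist; congr (_ * P _ _ _ _).
rewrite !exp_sum_cat addrA -(addrA (exp_sum beta)) exp_sum_garside2 /=.
by rewrite -mulnn mulnSr PoszD.
Qed.
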